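(* Let $A,B\subseteq\mathbb N$ satisfy condition $( * )$. Then for every infinite set $X\subseteq D_A$, every function $f:X\to D_B$, and every $n>1$, there are distinct $x,y\in X$ such that either $d_3(f(x),f(y))/d_3(x,y)>n$ or $d_3(f(x),f(y))/d_3(x,y)<1/n$.
   Context: $2^{\mathbb N}$ is the set of infinite binary sequences. For distinct $\eta,\nu\in 2^{\mathbb N}$ let $\Delta(\eta,\nu)$ be the least $m$ with $\eta(m)\ne\nu(m)$, and $d_3(\eta,\nu)=3^{-\Delta(\eta,\nu)}$ ($d_3(\eta,\eta)=0$). For infinite $A\subseteq\mathbb N$, $T_A\subseteq 2^{<\mathbb N}$ is the tree defined inductively: it contains the empty sequence, and for each $\eta\in T_A$ it contains both $\eta^\frown 0$ and $\eta^\frown 1$ if the length $|\eta|\in A$, and only $\eta^\frown 0$ if $|\eta|\notin A$. $D_A\subseteq 2^{\mathbb N}$ is the set of infinite branches of $T_A$, with metric $d_3$. Condition $( * )$ for $A,B\subseteq\mathbb N$: $|A|=|B|=\aleph_0$ and for every $n$ there is $k$ such that for all $a\in A$, $b\in B$ with $a,b>k$, either $a/b>n$ or $b/a>n$. *)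

From Stdlib Require Import Reals List Lia ClassicalEpsilon.
Open Scope R_scope.

Definition seq2 := nat -> bool.

(* Delta(eta,nu): least m with eta m <> nu m (meaningful for eta <> nu). *)
Definition Delta (eta nu : seq2) : nat :=
  epsilon (inhabits 0%nat)
    (fun m => eta m <> nu m /\ forall k, (k < m)%nat -> eta k = nu k).

Definition d3 (eta nu : seq2) : R :=
  if excluded_middle_informative (eta = nu) then 0
  else / (3 ^ Delta eta nu).

Definition prefix (eta : seq2) (m : nat) : list bool :=
  map eta (seq 0 m).

Inductive T (A : nat -> Prop) : list bool -> Prop :=
  | T_nil : T A nil
  | T_zero : forall s, T A s -> T A (s ++ false :: nil)
  | T_one : forall s, T A s -> A (length s) -> T A (s ++ true :: nil).

Definition D (A : nat -> Prop) (eta : seq2) : Prop :=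
  forall m, T A (prefix eta m).

Definition infinite_nat (A : nat -> Prop) : Prop :=
  forall k, exists a, (k < a)%nat /\ A a.

Definition cond_star (A B : nat -> Prop) : Prop :=
  infinite_nat A /\ infinite_nat B /\
  forall n : nat, exists k : nat, forall a b : nat,
    A a -> B b -> (k < a)%nat -> (k < b)%nat ->
    INR a / INR b > INR n \/ INR b / INR a > INR n.

Definition infinite_set (X : seq2 -> Prop) : Prop :=
  ~ exists l : list seq2, forall x, X x -> In x l.

(* Both metrics take values in powers of 3, so for x <> y with f x <> f y
   the ratio d3 (f x) (f y) / d3 x y equals 3 ^ (Delta x y - Delta (f x) (f y)).
   The first place where two branches of T_A differ is a splitting level, so
   Delta x y lies in A and Delta (f x) (f y) lies in B.  Condition (star)
   forces a large element of A and any element of B to be at least c apart,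
   and by pigeonhole an infinite X contains distinct x, y agreeing on an
   arbitrarily long prefix, i.e. with Delta x y as large as needed. *)
From Stdlib Require Import Reals Lra Lia List Classical ClassicalEpsilon
  FunctionalExtensionality Arith Wf_nat.
Open Scope R_scope.

Lemma Delta_spec (x y : seq2) : x <> y ->
  x (Delta x y) <> y (Delta x y) /\ forall k, (k < Delta x y)%nat -> x k = y k.
Proof.
  intro Hxy. unfold Delta. apply epsilon_spec.
  assert (Hdiff : exists i, x i <> y i).
  { apply not_all_ex_not. intro Hall. apply Hxy. apply functional_extensionality. exact Hall. }
  destruct Hdiff as [i Hi]. revert Hi. induction i as [i IH] using lt_wf_ind. intro Hi.
  destruct (classic (forall k, (k < i)%nat -> x k = y k)) as [Hagree | Hagree].
  - exists i; auto.
  - apply not_all_ex_not in Hagree. destruct Hagree as [k Hk].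
    apply imply_to_and in Hk. destruct Hk. eapply IH; eauto.
Qed.

Lemma Delta_ge_agree (x y : seq2) (m : nat) : x <> y ->
  (forall j, (j < m)%nat -> x j = y j) -> (m <= Delta x y)%nat.
Proof.
  intros Hxy Hagree. destruct (le_lt_dec m (Delta x y)) as [Hle | Hlt]; auto.
  exfalso. apply (proj1 (Delta_spec x y Hxy)). auto.
Qed.

Lemma d3_self (x : seq2) : d3 x x = 0.
Proof. unfold d3. destruct excluded_middle_informative; [reflexivity | congruence]. Qed.

Lemma d3_neq (x y : seq2) : x <> y -> d3 x y = / 3 ^ Delta x y.
Proof. intro Hxy. unfold d3. destruct excluded_middle_informative; [contradiction | reflexivity]. Qed.

Lemma d3_div_d3 (x y u v : seq2) : x <> y -> u <> v ->
  d3 u v / d3 x y = 3 ^ Delta x y / 3 ^ Delta u v.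
Proof.
  intros Hxy Huv. rewrite (d3_neq _ _ Hxy), (d3_neq _ _ Huv).
  assert (0 < 3 ^ Delta x y) by (apply pow_lt; lra).
  assert (0 < 3 ^ Delta u v) by (apply pow_lt; lra).
  field; lra.
Qed.

Lemma T_app_true_inv (A : nat -> Prop) (s : list bool) :
  T A (s ++ true :: nil) -> A (length s).
Proof.
  intro HT. remember (s ++ true :: nil) as l eqn:El. destruct HT.
  - exfalso. exact (app_cons_not_nil _ _ _ El).
  - apply app_inj_tail in El. destruct El. discriminate.
  - apply app_inj_tail in El. destruct El. subst. assumption.
Qed.

Lemma prefix_S (eta : seq2) (m : nat) : prefix eta (S m) = prefix eta m ++ eta m :: nil.
Proof. unfold prefix. rewrite seq_S, map_app. reflexivity. Qed.

Lemma length_prefix (eta : seq2) (m : nat) : length (prefix eta m) = m.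
Proof. unfold prefix. rewrite length_map, length_seq. reflexivity. Qed.

Lemma D_true_in (A : nat -> Prop) (eta : seq2) (m : nat) :
  D A eta -> eta m = true -> A m.
Proof.
  intros HD Htrue. specialize (HD (S m)). rewrite prefix_S, Htrue in HD.
  apply T_app_true_inv in HD. rewrite length_prefix in HD. exact HD.
Qed.

Lemma D_Delta_in (A : nat -> Prop) (x y : seq2) :
  D A x -> D A y -> x <> y -> A (Delta x y).
Proof.
  intros Hx Hy Hxy. pose proof (proj1 (Delta_spec x y Hxy)) as Hbit.
  destruct (x (Delta x y)) eqn:Ex; [exact (D_true_in A x _ Hx Ex) |].
  destruct (y (Delta x y)) eqn:Ey; [exact (D_true_in A y _ Hy Ey) | congruence].
Qed.

Lemma infinite_set_agree_prefix (X : seq2 -> Prop) : infinite_set X ->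
  forall m, exists p : seq2,
    infinite_set (fun y => X y /\ forall j, (j < m)%nat -> y j = p j).
Proof.
  intros HX m. induction m as [| m [p Hp]].
  - exists (fun _ => false). intros [l Hl]. apply HX. exists l. intros x Hx.
    apply Hl. split; [assumption | intros; lia].
  - set (Y b := fun y => (X y /\ forall j, (j < m)%nat -> y j = p j) /\ y m = b).
    set (extend b := fun j => if Nat.eqb j m then b else p j).
    assert (Hext : forall b y, Y b y ->
      X y /\ forall j, (j < S m)%nat -> y j = extend b j).
    { intros b y [[HXy Hy] Hym]. split; [assumption |]. intros j Hj. unfold extend.
      destruct (Nat.eqb_spec j m) as [-> | Hjm]; [assumption | apply Hy; lia]. }
    (* If the branch with bit [false] at m is finite, the one with [true] is not. *)
    destruct (classic (infinite_set (Y false))) as [Hfalse | Hfalse].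
    + exists (extend false). intros [l Hl]. apply Hfalse. exists l. intros y Hy.
      apply Hl, Hext, Hy.
    + apply NNPP in Hfalse. destruct Hfalse as [l0 Hl0].
      exists (extend true). intros [l1 Hl1]. apply Hp. exists (l0 ++ l1).
      intros y Hy. apply in_or_app.
      destruct (y m) eqn:Eym; [right; apply Hl1, (Hext true) | left; apply Hl0];
        split; assumption.
Qed.

Lemma infinite_set_two (Y : seq2 -> Prop) : infinite_set Y ->
  exists x y, Y x /\ Y y /\ x <> y.
Proof.
  intro HY. destruct (classic (exists x, Y x)) as [[x Hx] | Hempty].
  - destruct (classic (exists y, Y y /\ y <> x)) as [[y [Hy Hyx]] | Hsingle].
    + exists x, y. auto.
    + exfalso. apply HY. exists (x :: nil). intros z Hz. left.
      apply NNPP. intro Hzx. apply Hsingle. eauto.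
  - exfalso. apply HY. exists nil. intros z Hz. apply Hempty. eauto.
Qed.

Lemma INR_div_gt (a b n : nat) : (0 < b)%nat -> INR a / INR b > INR n -> (n * b < a)%nat.
Proof.
  intros Hb Hdiv. assert (0 < INR b) by (apply lt_0_INR; lia).
  apply INR_lt. rewrite mult_INR.
  apply (Rmult_lt_compat_r (INR b)) in Hdiv; [| assumption].
  unfold Rdiv in Hdiv. rewrite Rmult_assoc, Rinv_l, Rmult_1_r in Hdiv by lra. lra.
Qed.

(* Only elements of A need to be large: a small b is far below any large a. *)
Lemma cond_star_gap (A B : nat -> Prop) : cond_star A B ->
  forall c, exists k, forall a b, A a -> B b -> (k < a)%nat ->
    (b + c <= a)%nat \/ (a + c <= b)%nat.
Proof.
  intros [_ [_ Hstar]] c. destruct (Hstar 2%nat) as [k Hk].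
  exists (k + 2 * c)%nat. intros a b Ha Hb Hka.
  destruct (le_lt_dec b (k + c)) as [Hsmall | Hlarge]; [left; lia |].
  destruct (Hk a b Ha Hb ltac:(lia) ltac:(lia)) as [Hab | Hba].
  - apply INR_div_gt in Hab; lia.
  - apply INR_div_gt in Hba; lia.
Qed.

Lemma pow_unbounded (x r : R) : 1 < x -> exists c, r < x ^ c.
Proof.
  intro Hx. destruct (Pow_x_infinity x ltac:(rewrite Rabs_pos_eq; lra) (r + 1)) as [c Hc].
  exists c. specialize (Hc c (le_n c)).
  rewrite Rabs_pos_eq in Hc by (apply pow_le; lra). lra.
Qed.

Lemma pow_div_ge (x : R) (a b c : nat) : 1 <= x -> (b + c <= a)%nat -> x ^ c <= x ^ a / x ^ b.
Proof.
  intros Hx Hbca. replace a with (a - b + b)%nat by lia. rewrite pow_add.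
  assert (0 < x ^ b) by (apply pow_lt; lra).
  replace (x ^ (a - b) * x ^ b / x ^ b) with (x ^ (a - b)) by (field; lra).
  apply Rle_pow; [assumption | lia].
Qed.

Lemma pow_div_le (x : R) (a b c : nat) : 1 <= x -> (a + c <= b)%nat -> x ^ a / x ^ b <= / x ^ c.
Proof.
  intros Hx Hacb. replace b with (b - a + a)%nat by lia. rewrite pow_add.
  assert (0 < x ^ a) by (apply pow_lt; lra).
  assert (0 < x ^ c) by (apply pow_lt; lra).
  replace (x ^ a / (x ^ (b - a) * x ^ a)) with (/ x ^ (b - a))
    by (assert (0 < x ^ (b - a)) by (apply pow_lt; lra); field; lra).
  apply Rinv_le_contravar; [assumption | apply Rle_pow; [assumption | lia]].
Qed.

Theorem lemma4p1 (A B : nat -> Prop) (HAB : cond_star A B)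
  (X : seq2 -> Prop) (HXD : forall x, X x -> D A x) (HXinf : infinite_set X)
  (f : seq2 -> seq2) (Hf : forall x, X x -> D B (f x))
  (n : R) (Hn : n > 1) :
  exists x y, X x /\ X y /\ x <> y /\
    (d3 (f x) (f y) / d3 x y > n \/ d3 (f x) (f y) / d3 x y < / n).
Proof.
  destruct (pow_unbounded 3 n ltac:(lra)) as [c Hc].
  destruct (cond_star_gap A B HAB c) as [k Hgap].
  destruct (infinite_set_agree_prefix X HXinf (S k)) as [p Hp].
  destruct (infinite_set_two _ Hp) as [x [y [[Hx Hxp] [[Hy Hyp] Hxy]]]].
  exists x, y. do 3 (split; [assumption |]).
  assert (Hka : (S k <= Delta x y)%nat).
  { apply Delta_ge_agree; [assumption |]. intros j Hj. rewrite Hxp, Hyp; auto. }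
  destruct (classic (f x = f y)) as [Efxy | Hfxy].
  - right. rewrite Efxy, d3_self, Rdiv_0_l. apply Rinv_0_lt_compat; lra.
  - rewrite (d3_div_d3 _ _ _ _ Hxy Hfxy).
    assert (0 < 3 ^ c) by (apply pow_lt; lra).
    assert (HA : A (Delta x y)) by (apply D_Delta_in; auto).
    assert (HB : B (Delta (f x) (f y))) by (apply D_Delta_in; auto).
    destruct (Hgap _ _ HA HB ltac:(lia)) as [Hfar | Hfar].
    + left. pose proof (pow_div_ge 3 _ _ _ ltac:(lra) Hfar). lra.
    + right. eapply Rle_lt_trans; [apply (pow_div_le 3 _ _ _ ltac:(lra) Hfar) |].
      apply Rinv_lt_contravar; [apply Rmult_lt_0_compat |]; lra.
Qed.
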